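(* Let $n\ge 2$ be an integer. No relative equilibrium of the Newtonian planar $(1+n)$-body problem whose configuration consists of a central mass at the origin and a regular $n$-gon centered at the origin is really perverse.
   Context: The Newtonian planar $N$-body problem (gravitational constant $1$): bodies with masses $\mu_i>0$ at positions $r_i\in\mathbb{C}$ satisfy $\mu_i\ddot r_i=\sum_{j\ne i}\mu_i\mu_j\,\frac{r_j-r_i}{|r_j-r_i|^3}$. A relative equilibrium (angular velocity $1$) is a motion $r_i(t)=r_ie^{it}$ that is a solution. A mass system for this configuration is a pair $(m_0,m_1)$ of positive numbers: mass $m_0$ at the center and mass $m_1$ at every vertex of the $n$-gon; total mass $m_0+nm_1$, center of mass at the origin. The relative equilibrium is really perverse if there exist two distinct mass systems with the same total mass and the same center of mass for each of which $r_i(t)=r_ie^{it}$ is a solution. *)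

From Stdlib Require Import Reals Lra.
From Coquelicot Require Import Coquelicot.
Open Scope R_scope.

(* A planar configuration of N+1 bodies indexed 0..N: coordinates of body i. *)
Definition config := nat -> R * R.

Definition central_ngon (n : nat) (rho phi : R) : config :=
  fun i => match i with
           | O => (0, 0)
           | S _ => (rho * cos (phi + 2 * PI * INR i / INR n),
                     rho * sin (phi + 2 * PI * INR i / INR n))
           end.

Definition mass_sys (m0 m1 : R) : nat -> R :=
  fun i => match i with O => m0 | S _ => m1 end.

Definition dist2 (p q : R * R) : R := sqrt ((fst q - fst p) ^ 2 + (snd q - snd p) ^ 2).

(* Newtonian force (G = 1) on body i, coordinates x and y, bodies 0..N. *)
Definition force_x (N : nat) (mu : nat -> R) (q : nat -> R * R) (i : nat) : R :=
  sum_f_R0 (fun j => if Nat.eq_dec j i then 0 else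
     mu i * mu j * (fst (q j) - fst (q i)) / (dist2 (q i) (q j)) ^ 3) N.
Definition force_y (N : nat) (mu : nat -> R) (q : nat -> R * R) (i : nat) : R :=
  sum_f_R0 (fun j => if Nat.eq_dec j i then 0 else
     mu i * mu j * (snd (q j) - snd (q i)) / (dist2 (q i) (q j)) ^ 3) N.

(* r_i(t) = r_i e^{it} *)
Definition rot_motion (r : config) (i : nat) (t : R) : R * R :=
  (fst (r i) * cos t - snd (r i) * sin t, fst (r i) * sin t + snd (r i) * cos t).

Definition is_solution (N : nat) (mu : nat -> R) (q : nat -> R -> R * R) : Prop :=
  forall i, (i <= N)%nat ->
    (forall t, ex_derive (fun s => fst (q i s)) t) /\
    (forall t, ex_derive (fun s => snd (q i s)) t) /\
    (forall t, exists ax ay,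
        is_derive (Derive (fun s => fst (q i s))) t ax /\
        is_derive (Derive (fun s => snd (q i s))) t ay /\
        mu i * ax = force_x N mu (fun j => q j t) i /\
        mu i * ay = force_y N mu (fun j => q j t) i).

Definition total_mass (N : nat) (mu : nat -> R) : R := sum_f_R0 mu N.

Definition center_of_mass (N : nat) (mu : nat -> R) (r : config) : R * R :=
  (sum_f_R0 (fun j => mu j * fst (r j)) N / total_mass N mu,
   sum_f_R0 (fun j => mu j * snd (r j)) N / total_mass N mu).

Definition really_perverse (n : nat) (r : config) : Prop :=
  exists m0 m1 m0' m1' : R,
    0 < m0 /\ 0 < m1 /\ 0 < m0' /\ 0 < m1' /\
    (m0, m1) <> (m0', m1') /\
    center_of_mass n (mass_sys m0 m1) r = (0, 0) /\
    center_of_mass n (mass_sys m0' m1') r = (0, 0) /\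
    total_mass n (mass_sys m0 m1) = total_mass n (mass_sys m0' m1') /\
    center_of_mass n (mass_sys m0 m1) r = center_of_mass n (mass_sys m0' m1') r /\
    is_solution n (mass_sys m0 m1) (rot_motion r) /\
    is_solution n (mass_sys m0' m1') (rot_motion r).

(* Let v be the last vertex of the n-gon and F(v) the field at v of the other n - 1
   vertices (unit masses).  At a relative equilibrium with masses (m0, m1) the equation of
   motion of v reads  -m1 v = m0 m1 (0 - v) / rho^3 + m1^2 F(v).  Two distinct mass systems
   with the same total mass m0 + n m1 must have different m1, and subtracting the two
   equations eliminates m0 and forces F(v) = -n v / rho^3.  Each vertex at angle 2 pi i / n
   from v contributes -1 / (4 rho sin (pi i / n)) to v . F(v), so the identity becomes
   sum_{i=1}^{n-1} csc (pi i / n) = 4 n.  By csc 2a = cot a - cot 2a and the symmetry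
   i -> n - i, the left side equals sum_{i=1}^{n-1} cot (pi i / (2 n)).  Truncated Laurent
   series of cot bound this sum by expressions in harmonic numbers and power sums, whose exact
   evaluation shows that it is below 4 n for n <= 472 and above 4 n for 473 <= n <= 499;
   for n >= 500 the crude bound cot x >= 1/x - 0.41 x together with H_499 > 6.79 suffices. *)

From Stdlib Require Import Reals Lra Lia ZArith QArith Qreals Qround FunctionalExtensionality.
From Stdlib Require RMicromega.
From Coquelicot Require Import Coquelicot.
Open Scope R_scope.

(** * Equations of motion at a vertex *)

Lemma second_derivative_at_0 (f : R -> R) (A B a : R) :
  (forall s, f s = A * cos s + B * sin s) -> is_derive (Derive f) 0 a -> a = - A.
Proof.
  intros Hf Ha.
  assert (Hf' : forall t, B * cos t - A * sin t = Derive f t).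
  { intros t. symmetry. apply is_derive_unique.
    apply is_derive_ext with (fun s => A * cos s + B * sin s); [intros s; now rewrite Hf|].
    auto_derive; [exact I | ring]. }
  apply (is_derive_ext _ _ _ _ (fun t => eq_sym (Hf' t))) in Ha.
  assert (Ha' : is_derive (fun t => B * cos t - A * sin t) 0 (- A)).
  { auto_derive; [exact I|]. rewrite cos_0, sin_0. ring. }
  apply is_derive_unique in Ha, Ha'. congruence.
Qed.

Lemma rot_motion_at_0 (r : config) : (fun j => rot_motion r j 0) = r.
Proof.
  apply functional_extensionality. intros j. unfold rot_motion. rewrite cos_0, sin_0.
  destruct (r j) as [x y]. simpl. f_equal; ring.
Qed.

Definition newton_force (c : R * R -> R) (N : nat) (mu : nat -> R) (q : config) (i : nat) : R :=
  sum_f_R0 (fun j => if Nat.eq_dec j i then 0 else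
    mu i * mu j * (c (q j) - c (q i)) / dist2 (q i) (q j) ^ 3) N.

Lemma relative_equilibrium_balance N mu (r : config) i :
  is_solution N mu (rot_motion r) -> (i <= N)%nat ->
  mu i * - fst (r i) = newton_force fst N mu r i /\
  mu i * - snd (r i) = newton_force snd N mu r i.
Proof.
  intros Hsol Hi. destruct (Hsol i Hi) as (_ & _ & Hacc).
  destruct (Hacc 0) as (ax & ay & Hax & Hay & Ex & Ey).
  rewrite rot_motion_at_0 in Ex, Ey. unfold rot_motion in Hax, Hay. simpl in Hax, Hay.
  apply (second_derivative_at_0 _ (fst (r i)) (- snd (r i))) in Hax; [|intros; ring].
  apply (second_derivative_at_0 _ (snd (r i)) (fst (r i))) in Hay; [|intros; ring].
  subst. split; assumption.
Qed.

Definition vertex_field (c : R * R -> R) (r : config) (k : nat) : R :=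
  sum_f_R0 (fun i => (c (r (S i)) - c (r (S (S k)))) / dist2 (r (S (S k))) (r (S i)) ^ 3) k.

Lemma newton_force_last_vertex c a b k (r : config) :
  newton_force c (S (S k)) (mass_sys a b) r (S (S k))
  = b * a * (c (r O) - c (r (S (S k)))) / dist2 (r (S (S k))) (r O) ^ 3
    + b * b * vertex_field c r k.
Proof.
  unfold newton_force, vertex_field. rewrite decomp_sum by lia. simpl pred. cbn [sum_f_R0].
  destruct (Nat.eq_dec 0 (S (S k))) as [E|_]; [lia|].
  destruct (Nat.eq_dec (S (S k)) (S (S k))) as [_|E]; [|lia].
  rewrite scal_sum, Rplus_0_r. simpl mass_sys. f_equal.
  apply sum_eq. intros i Hi.
  destruct (Nat.eq_dec (S i) (S (S k))) as [E|_]; [lia|]. simpl. unfold Rdiv. ring.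
Qed.

Lemma total_mass_sys a b n : total_mass n (mass_sys a b) = a + INR n * b.
Proof.
  unfold total_mass. induction n as [|n IH]; cbn [sum_f_R0]; [simpl; ring|].
  rewrite IH, S_INR. simpl. ring.
Qed.

Lemma perverse_field_component N c A a b a' b' s :
  0 < b -> 0 < b' -> (a, b) <> (a', b') -> a + N * b = a' + N * b' ->
  b * - c = b * a * (0 - c) / s + b * b * A ->
  b' * - c = b' * a' * (0 - c) / s + b' * b' * A ->
  A = - N * c / s.
Proof.
  intros Hb Hb' Hne Htot E E'.
  assert (Hbb : b <> b') by (intros ->; apply Hne; f_equal; lra).
  assert (F : - c = - a * c / s + b * A).
  { apply Rmult_eq_reg_l with b; [rewrite E; unfold Rdiv; ring | lra]. }
  assert (F' : - c = - a' * c / s + b' * A).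
  { apply Rmult_eq_reg_l with b'; [rewrite E'; unfold Rdiv; ring | lra]. }
  assert (G : (b - b') * (A + N * c / s) = 0).
  { replace a with (a' + N * b' - N * b) in F by lra. unfold Rdiv in *. nra. }
  apply Rmult_integral in G. destruct G as [G | G]; [lra | unfold Rdiv in *; lra].
Qed.

Definition dot_attraction (v w : R * R) : R :=
  (fst v * (fst w - fst v) + snd v * (snd w - snd v)) / dist2 v w ^ 3.

Lemma sum_dot_attraction (r : config) k :
  sum_f_R0 (fun i => dot_attraction (r (S (S k))) (r (S i))) k
  = fst (r (S (S k))) * vertex_field fst r k + snd (r (S (S k))) * vertex_field snd r k.
Proof.
  unfold vertex_field. rewrite !scal_sum, <- plus_sum. apply sum_eq. intros i _.
  unfold dot_attraction, Rdiv. ring.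
Qed.

Lemma two_mass_systems_vertex_sum (r : config) k a b a' b' rho :
  0 < rho -> 0 < b -> 0 < b' -> (a, b) <> (a', b') ->
  total_mass (S (S k)) (mass_sys a b) = total_mass (S (S k)) (mass_sys a' b') ->
  r O = (0, 0) -> fst (r (S (S k))) ^ 2 + snd (r (S (S k))) ^ 2 = rho ^ 2 ->
  is_solution (S (S k)) (mass_sys a b) (rot_motion r) ->
  is_solution (S (S k)) (mass_sys a' b') (rot_motion r) ->
  sum_f_R0 (fun i => dot_attraction (r (S (S k))) (r (S i))) k = - INR (S (S k)) / rho.
Proof.
  intros Hrho Hb Hb' Hne Htot Hr0 Hnorm Hsol Hsol'.
  rewrite !total_mass_sys in Htot.
  assert (Hd : dist2 (r (S (S k))) (r O) = rho).
  { unfold dist2. rewrite Hr0. simpl. rewrite <- (sqrt_pow2 rho) by lra. f_equal. lra. }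
  destruct (relative_equilibrium_balance _ _ r _ Hsol (le_n _)) as [Ex Ey].
  destruct (relative_equilibrium_balance _ _ r _ Hsol' (le_n _)) as [Ex' Ey'].
  rewrite !newton_force_last_vertex, Hd, Hr0 in Ex, Ey, Ex', Ey'. simpl in Ex, Ey, Ex', Ey'.
  apply (perverse_field_component _ _ _ _ _ _ _ _ Hb Hb' Hne Htot Ex) in Ex'.
  apply (perverse_field_component _ _ _ _ _ _ _ _ Hb Hb' Hne Htot Ey) in Ey'.
  rewrite sum_dot_attraction, Ex', Ey'.
  replace (- INR (S (S k)) / rho) with (- INR (S (S k)) * rho ^ 2 / rho ^ 3) by (field; lra).
  rewrite <- Hnorm. field. lra.
Qed.

(** * The cosecant sum of the regular polygon *)

Definition half_angle (n i : nat) : R := PI * INR (S i) / (2 * INR n).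

Lemma half_angle_range n i : (S i < n)%nat -> 0 < half_angle n i < PI / 2.
Proof.
  intros Hi. unfold half_angle. pose proof PI_RGT_0.
  assert (INR (S i) < INR n) by (apply lt_INR; exact Hi).
  assert (0 < INR (S i)) by (apply lt_0_INR; lia).
  split.
  - apply Rdiv_lt_0_compat; nra.
  - apply Rmult_lt_reg_r with (2 * INR n); [lra|]. field_simplify; [nra | lra].
Qed.

Lemma double_half_angle n i : (0 < n)%nat -> 2 * half_angle n i = PI * INR (S i) / INR n.
Proof.
  intros Hn. unfold half_angle. assert (0 < INR n) by (apply lt_0_INR; exact Hn). field. lra.
Qed.

Definition cot_half_sum (k : nat) : R :=
  sum_f_R0 (fun i => cos (half_angle (S (S k)) i) / sin (half_angle (S (S k)) i)) k.

Lemma circle_dot_attraction rho al be th :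
  0 < rho -> 0 < sin th -> cos (al - be) = cos (2 * th) ->
  dot_attraction (rho * cos be, rho * sin be) (rho * cos al, rho * sin al)
  = / sin th * / (- 4 * rho).
Proof.
  intros Hrho Hth Hang. unfold dot_attraction, dist2. cbn [fst snd].
  rewrite cos_minus, cos_2a_sin in Hang.
  pose proof (sin2_cos2 al) as Pa. pose proof (sin2_cos2 be) as Pb. unfold Rsqr in Pa, Pb.
  replace ((rho * cos al - rho * cos be) ^ 2 + (rho * sin al - rho * sin be) ^ 2)
    with ((2 * rho * sin th) ^ 2) by nra.
  rewrite sqrt_pow2 by nra.
  replace (rho * cos be * (rho * cos al - rho * cos be)
           + rho * sin be * (rho * sin al - rho * sin be)) with (- 2 * rho ^ 2 * sin th ^ 2) by nra.
  field. lra.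
Qed.

Lemma central_ngon_dot_attraction k rho phi i : 0 < rho -> (i <= k)%nat ->
  dot_attraction (central_ngon (S (S k)) rho phi (S (S k))) (central_ngon (S (S k)) rho phi (S i))
  = / sin (PI * INR (S i) / INR (S (S k))) * / (- 4 * rho).
Proof.
  intros Hrho Hi. unfold central_ngon.
  assert (HN : 0 < INR (S (S k))) by (apply lt_0_INR; lia).
  destruct (half_angle_range (S (S k)) i) as [H1 H2]; [lia|].
  apply circle_dot_attraction; [exact Hrho | |].
  - rewrite <- double_half_angle by lia. apply sin_gt_0; lra.
  - replace (phi + 2 * PI * INR (S i) / INR (S (S k))
             - (phi + 2 * PI * INR (S (S k)) / INR (S (S k))))
      with (2 * (PI * INR (S i) / INR (S (S k))) - 2 * PI) by (field; lra).
    rewrite cos_minus, cos_2PI, sin_2PI. ring.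
Qed.

Lemma central_ngon_vertex_norm n rho phi i :
  fst (central_ngon n rho phi (S i)) ^ 2 + snd (central_ngon n rho phi (S i)) ^ 2 = rho ^ 2.
Proof.
  unfold central_ngon. cbn [fst snd].
  set (t := phi + 2 * PI * INR (S i) / INR n).
  pose proof (sin2_cos2 t) as Ht. unfold Rsqr in Ht. nra.
Qed.

Lemma sum_f_R0_rev (f : nat -> R) m : sum_f_R0 f m = sum_f_R0 (fun i => f (m - i)%nat) m.
Proof.
  revert f. induction m as [|m IH]; intros f; [reflexivity|].
  rewrite decomp_sum by lia. simpl pred. rewrite IH. cbn [sum_f_R0].
  rewrite Nat.sub_diag, Rplus_comm. f_equal.
  apply sum_eq. intros i Hi. f_equal. lia.
Qed.

Lemma sum_cot_multiples_pi k :
  sum_f_R0 (fun i => cos (PI * INR (S i) / INR (S (S k))) / sin (PI * INR (S i) / INR (S (S k)))) k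
  = 0.
Proof.
  set (f := fun i => cos (PI * INR (S i) / INR (S (S k))) / sin (PI * INR (S i) / INR (S (S k)))).
  assert (Hodd : sum_f_R0 f k = sum_f_R0 (fun i => - f i) k).
  { rewrite sum_f_R0_rev. apply sum_eq. intros i Hi. unfold f.
    assert (HN : 0 < INR (S (S k))) by (apply lt_0_INR; lia).
    replace (PI * INR (S (k - i)) / INR (S (S k))) with (PI - PI * INR (S i) / INR (S (S k)))
      by (rewrite (S_INR (k - i)), minus_INR, !S_INR by lia; pose proof (pos_INR k); field; lra).
    rewrite sin_PI_x, Rtrigo_facts.cos_pi_minus. unfold Rdiv. ring. }
  rewrite (sum_eq (fun i => - f i) (fun i => f i * -1)), <- scal_sum in Hodd by (intros; ring). lra.
Qed.

Lemma inv_sin_double a : sin a <> 0 -> cos a <> 0 ->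
  / sin (2 * a) = cos a / sin a - cos (2 * a) / sin (2 * a).
Proof. intros Hs Hc. rewrite sin_2a, cos_2a_cos. field. auto. Qed.

Lemma sum_inv_sin_eq_cot_half_sum k :
  sum_f_R0 (fun i => / sin (PI * INR (S i) / INR (S (S k)))) k = cot_half_sum k.
Proof.
  rewrite <- (Rminus_0_r (cot_half_sum k)), <- (sum_cot_multiples_pi k).
  unfold cot_half_sum. rewrite <- minus_sum. apply sum_eq. intros i Hi.
  rewrite <- double_half_angle by lia.
  destruct (half_angle_range (S (S k)) i) as [H1 H2]; [lia|].
  apply inv_sin_double.
  - apply Rgt_not_eq, sin_gt_0; lra.
  - apply Rgt_not_eq, cos_gt_0; lra.
Qed.

(** * Laurent bounds for the cotangent *)

Lemma INR_fact_S n : INR (fact (S n)) = INR (S n) * INR (fact n).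
Proof. rewrite <- mult_INR. reflexivity. Qed.

Lemma sin_cos_taylor_bounds x : 0 <= x <= PI / 2 ->
  x - x^3/6 + x^5/120 - x^7/5040 + x^9/362880 - x^11/39916800 <= sin x <=
  x - x^3/6 + x^5/120 - x^7/5040 + x^9/362880 - x^11/39916800 + x^13/6227020800 /\
  1 - x^2/2 + x^4/24 - x^6/720 + x^8/40320 - x^10/3628800 <= cos x <=
  1 - x^2/2 + x^4/24 - x^6/720 + x^8/40320 - x^10/3628800 + x^12/479001600.
Proof.
  intros Hx. pose proof PI_RGT_0.
  destruct (sin_bound x 2) as [Hs1 Hs2]; [lra|lra|].
  destruct (cos_bound x 2) as [Hc1 Hc2]; [lra|lra|].
  unfold sin_approx, cos_approx, sin_term, cos_term in *.
  cbn [sum_f_R0 Nat.mul Nat.add] in *.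
  repeat rewrite INR_fact_S in *. simpl INR in *.
  repeat split; lra.
Qed.

Lemma PI_bounds : 333/106 <= PI <= 355/113.
Proof.
  destruct (PI_2_3_7_ineq 6) as [H1 H2].
  unfold tg_alt, PI_2_3_7_tg, Ratan_seq in H1, H2.
  cbn [sum_f_R0 Nat.mul Nat.add] in H1, H2. simpl INR in H1, H2. simpl pow in H1, H2.
  lra.
Qed.

Lemma square_powers_bounds x : 0 <= x <= PI / 2 ->
  let z := x^2 in let B := (3927/2500)^2 in
  0 <= z <= B /\ 0 <= z^2 <= B^2 /\ 0 <= z^3 <= B^3 /\ 0 <= z^4 <= B^4 /\
  0 <= z^5 <= B^5 /\ 0 <= z^6 <= B^6.
Proof.
  intros Hx z B. pose proof PI_bounds.
  assert (Hz : 0 <= z <= B) by (unfold z, B; split; [apply pow_le | apply pow_incr]; lra).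
  repeat split; try lra; try (apply pow_le; lra); apply pow_incr; lra.
Qed.

(* Truncations of  cot x = 1/x - x/3 - x^3/45 - 2x^5/945 - x^7/4725 - 2x^9/93555 - ...:
   an upper bound for c9 = 0 and a lower bound for c9 = 1/10000 on (0, pi/2]. *)
Definition cot_poly (c9 x : R) : R :=
  1/x - x/3 - x^3/45 - 2*x^5/945 - x^7/4725 - c9 * x^9.

Lemma cot_le_div x p : 0 < x -> 0 < sin x -> x * cos x <= p * sin x ->
  cos x / sin x <= p / x.
Proof.
  intros Hx Hs H.
  replace (cos x / sin x) with (x * cos x * / (x * sin x)) by (field; lra).
  replace (p / x) with (p * sin x * / (x * sin x)) by (field; lra).
  apply Rmult_le_compat_r; [left; apply Rinv_0_lt_compat; nra | exact H].
Qed.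

Lemma div_le_cot x p : 0 < x -> 0 < sin x -> p * sin x <= x * cos x ->
  p / x <= cos x / sin x.
Proof.
  intros Hx Hs H.
  replace (cos x / sin x) with (x * cos x * / (x * sin x)) by (field; lra).
  replace (p / x) with (p * sin x * / (x * sin x)) by (field; lra).
  apply Rmult_le_compat_r; [left; apply Rinv_0_lt_compat; nra | exact H].
Qed.

Lemma cot_le_cot_poly x : 0 < x <= PI / 2 -> cos x / sin x <= cot_poly 0 x.
Proof.
  intros Hx. pose proof PI_bounds.
  destruct (sin_cos_taylor_bounds x) as [[Hsin _] [_ Hcos]]; [lra|].
  destruct (square_powers_bounds x) as (Z1 & Z2 & Z3 & Z4 & Z5 & Z6); [lra|].
  set (P := 1 - x^2/3 - x^4/45 - 2*x^6/945 - x^8/4725).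
  set (Rem := 2/93555 - 70349/50295168000 * x^2 + 277/7544275200 * (x^2)^2
              - 1/1886068800 * (x^2)^3 + 1/188606880000 * (x^2)^4).
  assert (HP : 0 <= P) by (unfold P; replace (x^4) with ((x^2)^2) by ring;
    replace (x^6) with ((x^2)^3) by ring; replace (x^8) with ((x^2)^4) by ring; lra).
  assert (HRem : 0 <= x^11 * Rem) by (apply Rmult_le_pos; [apply pow_le | unfold Rem]; lra).
  assert (Hcross : P * (x - x^3/6 + x^5/120 - x^7/5040 + x^9/362880 - x^11/39916800)
      = x * (1 - x^2/2 + x^4/24 - x^6/720 + x^8/40320 - x^10/3628800 + x^12/479001600)
        + x^11 * Rem) by (unfold P, Rem; field).
  replace (cot_poly 0 x) with (P / x) by (unfold cot_poly, P; field; lra).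
  apply cot_le_div; [lra | apply sin_gt_0; lra |].
  assert (x * cos x <= x * (1 - x^2/2 + x^4/24 - x^6/720 + x^8/40320 - x^10/3628800
                           + x^12/479001600)) by (apply Rmult_le_compat_l; lra).
  assert (P * (x - x^3/6 + x^5/120 - x^7/5040 + x^9/362880 - x^11/39916800) <= P * sin x)
    by (apply Rmult_le_compat_l; lra).
  lra.
Qed.

Lemma cot_poly_le_cot x : 0 < x <= PI / 2 -> cot_poly (1/10000) x <= cos x / sin x.
Proof.
  intros Hx. pose proof PI_bounds.
  destruct (sin_cos_taylor_bounds x) as [[_ Hsin] [Hcos _]]; [lra|].
  destruct (square_powers_bounds x) as (Z1 & Z2 & Z3 & Z4 & Z5 & Z6); [lra|].
  set (P := 1 - x^2/3 - x^4/45 - 2*x^6/945 - x^8/4725 - x^10/10000).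
  set (Rem := 14711/187110000 - 49921097/3269185920000 * x^2
              + 39066949/49037788800000 * (x^2)^2 - 315599/16345929600000 * (x^2)^3
              + 79621/294226732800000 * (x^2)^4 - 661/267478848000000 * (x^2)^5
              + 1/62270208000000 * (x^2)^6).
  assert (HRem : 0 <= x^11 * Rem) by (apply Rmult_le_pos; [apply pow_le | unfold Rem]; lra).
  assert (Hcross : x * (1 - x^2/2 + x^4/24 - x^6/720 + x^8/40320 - x^10/3628800)
      = P * (x - x^3/6 + x^5/120 - x^7/5040 + x^9/362880 - x^11/39916800 + x^13/6227020800)
        + x^11 * Rem) by (unfold P, Rem; field).
  replace (cot_poly (1/10000) x) with (P / x) by (unfold cot_poly, P; field; lra).
  assert (Hsin0 : 0 < sin x) by (apply sin_gt_0; lra).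
  apply div_le_cot; [lra | exact Hsin0 |].
  assert (x * (1 - x^2/2 + x^4/24 - x^6/720 + x^8/40320 - x^10/3628800) <= x * cos x)
    by (apply Rmult_le_compat_l; lra).
  destruct (Rle_or_lt P 0) as [HP | HP].
  - assert (0 <= cos x) by (apply cos_ge_0; lra). nra.
  - assert (P * sin x <= P * (x - x^3/6 + x^5/120 - x^7/5040 + x^9/362880 - x^11/39916800
                              + x^13/6227020800)) by (apply Rmult_le_compat_l; lra).
    lra.
Qed.

Lemma cot_ge_linear x : 0 < x <= PI / 2 -> 1/x - 41/100 * x <= cos x / sin x.
Proof.
  intros Hx. pose proof PI_bounds.
  destruct (square_powers_bounds x) as (Z1 & Z2 & Z3 & Z4 & Z5 & Z6); [lra|].
  assert (Hcoef : 1/3 + x^2/45 + 2*(x^2)^2/945 + (x^2)^3/4725 + (x^2)^4/10000 <= 41/100) by lra.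
  assert (x * (1/3 + x^2/45 + 2*(x^2)^2/945 + (x^2)^3/4725 + (x^2)^4/10000) <= x * (41/100))
    by (apply Rmult_le_compat_l; lra).
  pose proof (cot_poly_le_cot x Hx). unfold cot_poly in *.
  assert (x * (1/3 + x^2/45 + 2*(x^2)^2/945 + (x^2)^3/4725 + (x^2)^4/10000)
     = x/3 + x^3/45 + 2*x^5/945 + x^7/4725 + 1/10000 * x^9) by field.
  lra.
Qed.

(** * Evaluation of the cotangent sum *)

(* [harmonic m] is H_(m+1) and [power_sum e m] is 1^e + ... + (m+1)^e, as [sum_f_R0 f m]
   has m+1 terms. *)
Definition harmonic (m : nat) : R := sum_f_R0 (fun i => / INR (S i)) m.
Definition power_sum (e m : nat) : R := sum_f_R0 (fun i => INR (S i) ^ e) m.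

Definition poly_term (c p N : R) (e : nat) (s : R) : R := c * (p / (2 * N)) ^ e * s.

(* The sum of [cot_poly c9] over the half angles, with [PI] and the harmonic number
   abstracted as [p] and [h] so that they can be replaced by rational bounds. *)
Definition cot_poly_sum (c9 p N h s1 s3 s5 s7 s9 : R) : R :=
  2 * N / p * h - (poly_term (1/3) p N 1 s1 + poly_term (1/45) p N 3 s3
    + poly_term (2/945) p N 5 s5 + poly_term (1/4725) p N 7 s7 + poly_term c9 p N 9 s9).

Lemma sum_cot_poly c9 n m : 0 < INR n ->
  sum_f_R0 (fun i => cot_poly c9 (half_angle n i)) m
  = cot_poly_sum c9 PI (INR n) (harmonic m)
      (power_sum 1 m) (power_sum 3 m) (power_sum 5 m) (power_sum 7 m) (power_sum 9 m).
Proof.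
  intros Hn. pose proof PI_RGT_0.
  unfold cot_poly_sum, poly_term, harmonic, power_sum, cot_poly, half_angle.
  induction m as [|m IH]; cbn [sum_f_R0].
  - assert (0 < INR 1) by (apply lt_0_INR; lia). field. lra.
  - rewrite IH. assert (0 < INR (S (S m))) by (apply lt_0_INR; lia). field. lra.
Qed.

Lemma poly_term_le c p p' N e s : 0 <= c -> 0 < p <= p' -> 0 < N -> 0 <= s ->
  poly_term c p N e s <= poly_term c p' N e s.
Proof.
  intros Hc Hp HN Hs. unfold poly_term.
  apply Rmult_le_compat_r; [exact Hs|]. apply Rmult_le_compat_l; [exact Hc|].
  apply pow_incr. split.
  - apply Rle_mult_inv_pos; lra.
  - apply Rmult_le_compat_r; [left; apply Rinv_0_lt_compat|]; lra.
Qed.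

Lemma cot_poly_sum_le c9 p p' N h h' s1 s3 s5 s7 s9 :
  0 <= c9 -> 0 < p <= p' -> 0 < N -> h' <= h -> 0 <= h ->
  0 <= s1 -> 0 <= s3 -> 0 <= s5 -> 0 <= s7 -> 0 <= s9 ->
  cot_poly_sum c9 p' N h' s1 s3 s5 s7 s9 <= cot_poly_sum c9 p N h s1 s3 s5 s7 s9.
Proof.
  intros Hc9 Hp HN Hh Hh0 H1 H3 H5 H7 H9. unfold cot_poly_sum.
  assert (2 * N / p' * h' <= 2 * N / p * h).
  { apply Rle_trans with (2 * N / p' * h).
    - apply Rmult_le_compat_l; [apply Rle_mult_inv_pos|]; lra.
    - apply Rmult_le_compat_r; [lra|]. apply Rmult_le_compat_l; [lra|].
      apply Rinv_le_contravar; lra. }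
  pose proof (poly_term_le (1/3) p p' N 1 s1). pose proof (poly_term_le (1/45) p p' N 3 s3).
  pose proof (poly_term_le (2/945) p p' N 5 s5). pose proof (poly_term_le (1/4725) p p' N 7 s7).
  pose proof (poly_term_le c9 p p' N 9 s9).
  lra.
Qed.

Definition scale : positive := 10^12.

Fixpoint harmonic_floor (m : nat) : Z :=
  match m with
  | O => Zpos scale
  | S m' => (harmonic_floor m' + Zpos scale / Z.of_nat (S (S m')))%Z
  end.

Fixpoint harmonic_ceil (m : nat) : Z :=
  match m with
  | O => Zpos scale
  | S m' => (harmonic_ceil m' + (Zpos scale + Z.of_nat (S m')) / Z.of_nat (S (S m')))%Z
  end.

Lemma scale_pos : 0 < IZR (Zpos scale).
Proof. apply IZR_lt. lia. Qed.

Lemma harmonic_floor_le m : IZR (harmonic_floor m) / IZR (Zpos scale) <= harmonic m.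
Proof.
  pose proof scale_pos.
  induction m as [|m IH]; unfold harmonic in *; cbn [harmonic_floor sum_f_R0].
  - simpl INR. rewrite Rinv_1. unfold Rdiv. rewrite Rmult_inv_r; lra.
  - set (j := Z.of_nat (S (S m))).
    assert (Hj : 0 < IZR j) by (apply IZR_lt; lia).
    assert (Hdiv : (j * (Zpos scale / j) <= Zpos scale)%Z) by (apply Z.mul_div_le; lia).
    apply IZR_le in Hdiv. rewrite mult_IZR in Hdiv.
    rewrite plus_IZR, INR_IZR_INZ. fold j.
    assert (IZR (Zpos scale / j) / IZR (Zpos scale) <= / IZR j).
    { apply Rmult_le_reg_l with (IZR j * IZR (Zpos scale)); [nra|].
      field_simplify; lra. }
    unfold Rdiv in *. lra.
Qed.

Lemma harmonic_le_ceil m : harmonic m <= IZR (harmonic_ceil m) / IZR (Zpos scale).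
Proof.
  pose proof scale_pos.
  induction m as [|m IH]; unfold harmonic in *; cbn [harmonic_ceil sum_f_R0].
  - simpl INR. rewrite Rinv_1. unfold Rdiv. rewrite Rmult_inv_r; lra.
  - set (j := Z.of_nat (S (S m))).
    assert (Hj : 0 < IZR j) by (apply IZR_lt; lia).
    replace (Zpos scale + Z.of_nat (S m))%Z with (Zpos scale + j - 1)%Z by lia.
    assert (Hdiv : (Zpos scale <= j * ((Zpos scale + j - 1) / j))%Z).
    { pose proof (Z.div_mod (Zpos scale + j - 1) j ltac:(lia)).
      pose proof (Z.mod_pos_bound (Zpos scale + j - 1) j ltac:(lia)). lia. }
    apply IZR_le in Hdiv. rewrite mult_IZR in Hdiv.
    rewrite plus_IZR, INR_IZR_INZ. fold j.
    assert (/ IZR j <= IZR ((Zpos scale + j - 1) / j) / IZR (Zpos scale)).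
    { apply Rmult_le_reg_l with (IZR j * IZR (Zpos scale)); [nra|].
      field_simplify; lra. }
    unfold Rdiv in *. lra.
Qed.

Lemma harmonic_nonneg m : 0 <= harmonic m.
Proof.
  apply cond_pos_sum. intros i. left. apply Rinv_0_lt_compat, lt_0_INR. lia.
Qed.

Lemma power_sum_nonneg e m : 0 <= power_sum e m.
Proof. apply cond_pos_sum. intros i. apply pow_le, pos_INR. Qed.

Fixpoint power_sum_Z (e m : nat) : Z :=
  match m with
  | O => 1
  | S m' => (power_sum_Z e m' + Z.of_nat (S (S m')) ^ Z.of_nat e)%Z
  end.

Lemma power_sum_Z_spec e m : IZR (power_sum_Z e m) = power_sum e m.
Proof.
  unfold power_sum. induction m as [|m IH]; cbn [power_sum_Z sum_f_R0].
  - simpl INR. now rewrite pow1.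
  - now rewrite plus_IZR, IH, <- pow_IZR, <- INR_IZR_INZ.
Qed.

Lemma Q2R_inject_Z z : Q2R (inject_Z z) = IZR z.
Proof. unfold Q2R. cbn [inject_Z Qnum Qden]. now rewrite Rinv_1, Rmult_1_r. Qed.

Lemma Q2R_ceiling q : Q2R q <= IZR (Qceiling q).
Proof. rewrite <- Q2R_inject_Z. apply Qle_Rle, Qle_ceiling. Qed.

Lemma Q2R_floor q : IZR (Qfloor q) <= Q2R q.
Proof. rewrite <- Q2R_inject_Z. apply Qle_Rle, Qfloor_le. Qed.

Lemma Q2R_neq_0 q : ~ (q == 0)%Q -> Q2R q <> 0.
Proof. intros Hq C. apply Hq, eqR_Qeq. rewrite C. unfold Q2R. simpl. lra. Qed.

Definition poly_term_Q (c p N : Q) (e : nat) (s : Z) : Q :=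
  (c * (p / (2 * N)) ^ Z.of_nat e * inject_Z s * inject_Z (Zpos scale))%Q.

Lemma poly_term_Q_spec c p N e s : ~ (N == 0)%Q ->
  Q2R (poly_term_Q c p N e s) = poly_term (Q2R c) (Q2R p) (Q2R N) e (IZR s) * IZR (Zpos scale).
Proof.
  intros HN. unfold poly_term_Q, poly_term.
  assert (H2N : ~ (2 * N == 0)%Q).
  { intros C. apply HN. rewrite <- (Qmult_0_r 2) in C. now apply Qmult_inj_l in C. }
  rewrite !Q2R_mult, RMicromega.Q2RpowerRZ by (right; lia).
  rewrite Q2R_div, Q2R_mult, !Q2R_inject_Z, <- pow_powerRZ by exact H2N.
  replace (Q2R 2) with 2 by (unfold Q2R; simpl; lra). reflexivity.
Qed.

Definition cot_poly_sum_ceil (c9 p N : Q) (h s1 s3 s5 s7 s9 : Z) : Z :=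
  (Qceiling (2 * N / p * inject_Z h)
   - (Qfloor (poly_term_Q (1#3) p N 1 s1) + Qfloor (poly_term_Q (1#45) p N 3 s3)
      + Qfloor (poly_term_Q (2#945) p N 5 s5) + Qfloor (poly_term_Q (1#4725) p N 7 s7)
      + Qfloor (poly_term_Q c9 p N 9 s9)))%Z.

Definition cot_poly_sum_floor (c9 p N : Q) (h s1 s3 s5 s7 s9 : Z) : Z :=
  (Qfloor (2 * N / p * inject_Z h)
   - (Qceiling (poly_term_Q (1#3) p N 1 s1) + Qceiling (poly_term_Q (1#45) p N 3 s3)
      + Qceiling (poly_term_Q (2#945) p N 5 s5) + Qceiling (poly_term_Q (1#4725) p N 7 s7)
      + Qceiling (poly_term_Q c9 p N 9 s9)))%Z.

Lemma cot_poly_sum_scaled c9 p N h s1 s3 s5 s7 s9 : ~ (p == 0)%Q -> ~ (N == 0)%Q ->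
  cot_poly_sum (Q2R c9) (Q2R p) (Q2R N) (IZR h / IZR (Zpos scale))
    (IZR s1) (IZR s3) (IZR s5) (IZR s7) (IZR s9) * IZR (Zpos scale)
  = Q2R (2 * N / p * inject_Z h)
    - (Q2R (poly_term_Q (1#3) p N 1 s1) + Q2R (poly_term_Q (1#45) p N 3 s3)
       + Q2R (poly_term_Q (2#945) p N 5 s5) + Q2R (poly_term_Q (1#4725) p N 7 s7)
       + Q2R (poly_term_Q c9 p N 9 s9)).
Proof.
  intros Hp HN. rewrite !poly_term_Q_spec by exact HN.
  rewrite Q2R_mult, Q2R_div, Q2R_mult, Q2R_inject_Z by exact Hp.
  pose proof scale_pos. pose proof (Q2R_neq_0 p Hp).
  change (Q2R 2) with (2 / 1). change (Q2R (1#3)) with (1 / 3).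
  change (Q2R (1#45)) with (1 / 45). change (Q2R (2#945)) with (2 / 945).
  change (Q2R (1#4725)) with (1 / 4725).
  unfold cot_poly_sum. field. lra.
Qed.

Lemma cot_poly_sum_le_ceil c9 p N h s1 s3 s5 s7 s9 : ~ (p == 0)%Q -> ~ (N == 0)%Q ->
  cot_poly_sum (Q2R c9) (Q2R p) (Q2R N) (IZR h / IZR (Zpos scale))
    (IZR s1) (IZR s3) (IZR s5) (IZR s7) (IZR s9) * IZR (Zpos scale)
  <= IZR (cot_poly_sum_ceil c9 p N h s1 s3 s5 s7 s9).
Proof.
  intros Hp HN. rewrite cot_poly_sum_scaled by assumption.
  unfold cot_poly_sum_ceil. rewrite minus_IZR, !plus_IZR.
  pose proof (Q2R_ceiling (2 * N / p * inject_Z h)).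
  pose proof (Q2R_floor (poly_term_Q (1#3) p N 1 s1)).
  pose proof (Q2R_floor (poly_term_Q (1#45) p N 3 s3)).
  pose proof (Q2R_floor (poly_term_Q (2#945) p N 5 s5)).
  pose proof (Q2R_floor (poly_term_Q (1#4725) p N 7 s7)).
  pose proof (Q2R_floor (poly_term_Q c9 p N 9 s9)).
  lra.
Qed.

Lemma cot_poly_sum_floor_le c9 p N h s1 s3 s5 s7 s9 : ~ (p == 0)%Q -> ~ (N == 0)%Q ->
  IZR (cot_poly_sum_floor c9 p N h s1 s3 s5 s7 s9)
  <= cot_poly_sum (Q2R c9) (Q2R p) (Q2R N) (IZR h / IZR (Zpos scale))
       (IZR s1) (IZR s3) (IZR s5) (IZR s7) (IZR s9) * IZR (Zpos scale).
Proof.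
  intros Hp HN. rewrite cot_poly_sum_scaled by assumption.
  unfold cot_poly_sum_floor. rewrite minus_IZR, !plus_IZR.
  pose proof (Q2R_floor (2 * N / p * inject_Z h)).
  pose proof (Q2R_ceiling (poly_term_Q (1#3) p N 1 s1)).
  pose proof (Q2R_ceiling (poly_term_Q (1#45) p N 3 s3)).
  pose proof (Q2R_ceiling (poly_term_Q (2#945) p N 5 s5)).
  pose proof (Q2R_ceiling (poly_term_Q (1#4725) p N 7 s7)).
  pose proof (Q2R_ceiling (poly_term_Q c9 p N 9 s9)).
  lra.
Qed.

(* The checks below scan k upwards carrying the partial sums, so that each partial sum
   is computed once. *)
Definition sums_state : Type := (Z * Z * Z * Z * Z * Z * Z)%type.

Definition partial_sums (k : nat) : sums_state :=
  (harmonic_floor k, harmonic_ceil k, power_sum_Z 1 k, power_sum_Z 3 k, power_sum_Z 5 k,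
   power_sum_Z 7 k, power_sum_Z 9 k).

Definition next_partial_sums (k : nat) (x : sums_state) : sums_state :=
  let '(hf, hc, s1, s3, s5, s7, s9) := x in
  let j := Z.of_nat (S (S k)) in
  (hf + Zpos scale / j, hc + (Zpos scale + Z.of_nat (S k)) / j,
   s1 + j ^ 1, s3 + j ^ 3, s5 + j ^ 5, s7 + j ^ 7, s9 + j ^ 9)%Z.

Lemma partial_sums_S k : partial_sums (S k) = next_partial_sums k (partial_sums k).
Proof. reflexivity. Qed.

Fixpoint all_from {A : Type} (chk : nat -> A -> bool) (next : nat -> A -> A)
    (c k : nat) (x : A) : bool :=
  match c with
  | O => true
  | S c' => chk k x && all_from chk next c' (S k) (next k x)
  end.

Lemma all_from_spec {A : Type} chk next (f : nat -> A) :
  (forall k, f (S k) = next k (f k)) ->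
  forall c k, all_from chk next c k (f k) = true ->
  forall j, (k <= j < k + c)%nat -> chk j (f j) = true.
Proof.
  intros Hf c. induction c as [|c IH]; intros k H j Hj; [lia|].
  cbn [all_from] in H. apply andb_prop in H as [Hk Hrest].
  destruct (Nat.eq_dec j k) as [->|Hne]; [exact Hk|].
  rewrite <- Hf in Hrest. apply (IH (S k) Hrest). lia.
Qed.

Definition vertex_count_Q (k : nat) : Q := inject_Z (Z.of_nat (S (S k))).

Lemma vertex_count_Q_spec k : Q2R (vertex_count_Q k) = INR (S (S k)).
Proof. unfold vertex_count_Q. now rewrite Q2R_inject_Z, <- INR_IZR_INZ. Qed.

Lemma vertex_count_Q_neq0 k : ~ (vertex_count_Q k == 0)%Q.
Proof. unfold vertex_count_Q, Qeq. simpl. lia. Qed.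

Definition upper_check (k : nat) (x : sums_state) : bool :=
  let '(_, hc, s1, s3, s5, s7, s9) := x in
  (cot_poly_sum_ceil 0 (333#106) (vertex_count_Q k) hc s1 s3 s5 s7 s9
     <? 4 * Z.of_nat (S (S k)) * Zpos scale)%Z.

Definition lower_check (k : nat) (x : sums_state) : bool :=
  let '(hf, _, s1, s3, s5, s7, s9) := x in
  (4 * Z.of_nat (S (S k)) * Zpos scale
     <? cot_poly_sum_floor (1#10000) (355#113) (vertex_count_Q k) hf s1 s3 s5 s7 s9)%Z.

Lemma upper_check_spec k : upper_check k (partial_sums k) = true ->
  cot_poly_sum 0 (333/106) (INR (S (S k))) (IZR (harmonic_ceil k) / IZR (Zpos scale))
    (power_sum 1 k) (power_sum 3 k) (power_sum 5 k) (power_sum 7 k) (power_sum 9 k)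
  < 4 * INR (S (S k)).
Proof.
  unfold upper_check, partial_sums. intros Hc. apply Z.ltb_lt, IZR_lt in Hc.
  eapply Rle_lt_trans in Hc;
    [|apply cot_poly_sum_le_ceil; [discriminate | apply vertex_count_Q_neq0]].
  rewrite !mult_IZR, <- INR_IZR_INZ, vertex_count_Q_spec, !power_sum_Z_spec in Hc.
  replace (Q2R 0) with 0 in Hc by (unfold Q2R; simpl; lra).
  change (Q2R (333#106)) with (333 / 106) in Hc.
  apply Rmult_lt_reg_r with (IZR (Zpos scale)); [apply scale_pos | lra].
Qed.

Lemma lower_check_spec k : lower_check k (partial_sums k) = true ->
  4 * INR (S (S k)) <
  cot_poly_sum (1/10000) (355/113) (INR (S (S k))) (IZR (harmonic_floor k) / IZR (Zpos scale))
    (power_sum 1 k) (power_sum 3 k) (power_sum 5 k) (power_sum 7 k) (power_sum 9 k).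
Proof.
  unfold lower_check, partial_sums. intros Hc. apply Z.ltb_lt, IZR_lt in Hc.
  eapply Rlt_le_trans in Hc;
    [|apply cot_poly_sum_floor_le; [discriminate | apply vertex_count_Q_neq0]].
  rewrite !mult_IZR, <- INR_IZR_INZ, vertex_count_Q_spec, !power_sum_Z_spec in Hc.
  change (Q2R (1#10000)) with (1 / 10000) in Hc.
  change (Q2R (355#113)) with (355 / 113) in Hc.
  apply Rmult_lt_reg_r with (IZR (Zpos scale)); [apply scale_pos | lra].
Qed.

Lemma cot_half_sum_lt k : upper_check k (partial_sums k) = true ->
  cot_half_sum k < 4 * INR (S (S k)).
Proof.
  intros Hc%upper_check_spec.
  pose proof PI_bounds. assert (HN : 0 < INR (S (S k))) by (apply lt_0_INR; lia).
  assert (Hpoly : cot_half_sum k <= sum_f_R0 (fun i => cot_poly 0 (half_angle (S (S k)) i)) k).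
  { apply sum_Rle. intros i Hi. destruct (half_angle_range (S (S k)) i) as [H1 H2]; [lia|].
    apply cot_le_cot_poly. lra. }
  rewrite sum_cot_poly in Hpoly by exact HN.
  pose proof (harmonic_le_ceil k). pose proof (harmonic_nonneg k).
  assert (cot_poly_sum 0 PI (INR (S (S k))) (harmonic k) (power_sum 1 k) (power_sum 3 k)
            (power_sum 5 k) (power_sum 7 k) (power_sum 9 k)
          <= cot_poly_sum 0 (333/106) (INR (S (S k))) (IZR (harmonic_ceil k) / IZR (Zpos scale))
            (power_sum 1 k) (power_sum 3 k) (power_sum 5 k) (power_sum 7 k) (power_sum 9 k))
    by (apply cot_poly_sum_le; try apply power_sum_nonneg; lra).
  lra.
Qed.

Lemma cot_half_sum_gt k : lower_check k (partial_sums k) = true ->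
  4 * INR (S (S k)) < cot_half_sum k.
Proof.
  intros Hc%lower_check_spec.
  pose proof PI_bounds. assert (HN : 0 < INR (S (S k))) by (apply lt_0_INR; lia).
  assert (Hpoly : sum_f_R0 (fun i => cot_poly (1/10000) (half_angle (S (S k)) i)) k
                  <= cot_half_sum k).
  { apply sum_Rle. intros i Hi. destruct (half_angle_range (S (S k)) i) as [H1 H2]; [lia|].
    apply cot_poly_le_cot. lra. }
  rewrite sum_cot_poly in Hpoly by exact HN.
  pose proof (harmonic_floor_le k). pose proof (harmonic_nonneg k).
  assert (cot_poly_sum (1/10000) (355/113) (INR (S (S k)))
            (IZR (harmonic_floor k) / IZR (Zpos scale))
            (power_sum 1 k) (power_sum 3 k) (power_sum 5 k) (power_sum 7 k) (power_sum 9 k)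
          <= cot_poly_sum (1/10000) PI (INR (S (S k))) (harmonic k) (power_sum 1 k)
            (power_sum 3 k) (power_sum 5 k) (power_sum 7 k) (power_sum 9 k))
    by (apply cot_poly_sum_le; try apply power_sum_nonneg; lra).
  lra.
Qed.

Lemma upper_checks : all_from upper_check next_partial_sums 471 0 (partial_sums 0) = true.
Proof. vm_compute. reflexivity. Qed.

Lemma lower_checks : all_from lower_check next_partial_sums 27 471 (partial_sums 471) = true.
Proof. vm_compute. reflexivity. Qed.

Lemma harmonic_le_add m d : harmonic m <= harmonic (m + d).
Proof.
  induction d as [|d IH]; [rewrite Nat.add_0_r; lra|].
  rewrite Nat.add_succ_r. unfold harmonic in *. cbn [sum_f_R0].
  assert (0 < / INR (S (S (m + d)))) by (apply Rinv_0_lt_compat, lt_0_INR; lia).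
  lra.
Qed.

Lemma harmonic_498_ge : 679/100 <= harmonic 498.
Proof.
  eapply Rle_trans; [|apply harmonic_floor_le].
  assert (Hcmp : (6790000000000 <= harmonic_floor 498)%Z)
    by (apply Z.leb_le; vm_compute; reflexivity).
  apply IZR_le in Hcmp. change (Zpos scale) with 1000000000000%Z. lra.
Qed.

Lemma sum_inv_sub_linear n m : 0 < INR n ->
  sum_f_R0 (fun i => 1 / half_angle n i - 41/100 * half_angle n i) m
  = 2 * INR n / PI * harmonic m - 41/100 * (PI / (2 * INR n)) * (INR (S m) * INR (S (S m)) / 2).
Proof.
  intros Hn. pose proof PI_RGT_0. unfold harmonic, half_angle.
  induction m as [|m IH]; cbn [sum_f_R0].
  - simpl INR. field. lra.
  - rewrite IH, !S_INR. simpl INR. pose proof (pos_INR m). field. lra.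
Qed.

Lemma cot_half_sum_gt_large k : (498 <= k)%nat -> 4 * INR (S (S k)) < cot_half_sum k.
Proof.
  intros Hk. pose proof PI_bounds.
  set (N := INR (S (S k))). assert (HN : 0 < N) by (apply lt_0_INR; lia).
  assert (Hlin : sum_f_R0 (fun i => 1 / half_angle (S (S k)) i - 41/100 * half_angle (S (S k)) i) k
                 <= cot_half_sum k).
  { apply sum_Rle. intros i Hi. destruct (half_angle_range (S (S k)) i) as [H1 H2]; [lia|].
    apply cot_ge_linear. lra. }
  rewrite sum_inv_sub_linear in Hlin by exact HN. fold N in Hlin.
  replace (INR (S k)) with (N - 1) in Hlin by (unfold N; rewrite (S_INR (S k)); ring).
  assert (Hh : 679/100 <= harmonic k).
  { replace k with (498 + (k - 498))%nat by lia.
    eapply Rle_trans; [apply harmonic_498_ge | apply harmonic_le_add]. }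
  assert (Hsplit : 2 * N / PI * harmonic k - 41/100 * (PI / (2 * N)) * ((N - 1) * N / 2)
            = N * (2 * harmonic k / PI - 41/100 * PI * (N - 1) / (4 * N))) by (field; lra).
  assert (Hcorr : 41/100 * PI * (N - 1) / (4 * N) <= 41/100 * PI / 4).
  { apply Rmult_le_reg_r with (4 * N); [lra|]. field_simplify; lra. }
  assert (Hmain : 4 + 41/100 * PI / 4 < 2 * harmonic k / PI).
  { apply Rmult_lt_reg_r with PI; [lra|]. field_simplify; [nra | lra]. }
  nra.
Qed.

Lemma cot_half_sum_neq k : cot_half_sum k <> 4 * INR (S (S k)).
Proof.
  (* The sum crosses 4 n between n = 472 and n = 473. *)
  destruct (le_lt_dec k 470) as [H1 | H1]; [|destruct (le_lt_dec k 497) as [H2 | H2]].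
  - assert (cot_half_sum k < 4 * INR (S (S k))); [|lra].
    apply cot_half_sum_lt, (all_from_spec _ _ _ partial_sums_S 471 0 upper_checks). lia.
  - assert (4 * INR (S (S k)) < cot_half_sum k); [|lra].
    apply cot_half_sum_gt, (all_from_spec _ _ _ partial_sums_S 27 471 lower_checks). lia.
  - pose proof (cot_half_sum_gt_large k ltac:(lia)). lra.
Qed.

Theorem proposition3 (n : nat) (rho phi : R) :
  (2 <= n)%nat -> 0 < rho -> ~ really_perverse n (central_ngon n rho phi).
Proof.
  intros Hn Hrho. destruct n as [|[|k]]; [lia | lia |].
  intros (m0 & m1 & m0' & m1' & _ & Hm1 & _ & Hm1' & Hne & _ & _ & Htot & _ & Hsol & Hsol').
  pose proof (two_mass_systems_vertex_sum _ k _ _ _ _ rho Hrho Hm1 Hm1' Hne Htot eq_refl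
                (central_ngon_vertex_norm _ rho phi (S k)) Hsol Hsol') as Hsum.
  rewrite (sum_eq _ _ _ (fun i Hi => central_ngon_dot_attraction k rho phi i Hrho Hi)) in Hsum.
  rewrite <- scal_sum, sum_inv_sin_eq_cot_half_sum in Hsum.
  apply (cot_half_sum_neq k).
  apply Rmult_eq_reg_l with (/ (- 4 * rho)); [rewrite Hsum; field; lra |].
  apply Rinv_neq_0_compat. lra.
Qed.
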